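(* Any two welded knot diagrams $K$ and $K'$ are diagonal-equivalent, i.e. one can be obtained from the other by a finite sequence of diagonal moves and classical and welded Reidemeister moves.
   Context: A welded knot diagram is a knot diagram that may have welded (virtual) crossings as well as classical crossings; welded knots are equivalence classes of welded knot diagrams under the three classical Reidemeister moves and the welded Reidemeister moves (the virtual Reidemeister moves together with the move allowing a strand passing over to slide past a welded crossing). A diagonal move (D-move) is a local move on a diagram defined as follows. Consider a disk in which the diagram consists of four arcs $a,b,c,d$ arranged in a ''$\#$'' pattern: $a$ and $c$ do not meet each other, $b$ and $d$ do not meet each other, and each of $a,c$ crosses each of $b,d$ exactly once in a classical crossing, giving four crossings labelled $1,2,3,4$ in cyclic order around the central square. The pairs $\{1,3\}$ and $\{2,4\}$ are the diagonal crossing pairs. A diagonal move changes the over/under information at both crossings of one diagonal pair and leaves the rest of the diagram unchanged; it is allowed for every choice of orientations of the arcs. *)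

From HB Require Import structures.
From mathcomp Require Import all_boot all_order all_algebra.
From Stdlib Require Import Relations.
Set Implicit Arguments. Unset Strict Implicit. Unset Printing Implicit Defensive.
Import Order.TTheory GRing.Theory Num.Theory.

(* A letter (c, o, s) records a passage of the knot through crossing c,
   o = true when the knot passes OVER at this passage, s = true when the
   crossing is positive.  A knot diagram (with classical and welded/virtual
   crossings, the latter being invisible) is a cyclic Gauss word. *)
Definition letter := (nat * bool * bool)%type.
Definition lab (l : letter) : nat := l.1.1.

Definition gauss_ok (w : seq letter) : Prop :=
  forall c, c \in map lab w ->
    exists s : bool,
      perm_eq [seq l <- w | lab l == c] [:: (c, true, s); (c, false, s)].

(* A local move replaces, inside a disk, strand fragments F by F' (strand i
   of F and of F' have the same endpoints).  Outside the disk the strands are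
   connected in an arbitrary order [ord] by arbitrary words [us]. *)
Definition place (frs us : seq (seq letter)) : seq letter :=
  flatten [seq p.1 ++ p.2 | p <- zip frs us].

Definition local_move (F F' : seq (seq letter)) (w w' : seq letter) : Prop :=
  size F = size F' /\
  exists (ord : seq nat) (us : seq (seq letter)),
    [/\ perm_eq ord (iota 0 (size F)), size us = size F,
        w = place [seq nth [::] F i | i <- ord] us &
        w' = place [seq nth [::] F' i | i <- ord] us].

Local Open Scope ring_scope.
Definition vec := (rat * rat)%type.
Definition det (u v : vec) : rat := u.1 * v.2 - u.2 * v.1.
Definition vsub (u v : vec) : vec := (u.1 - v.1, u.2 - v.2).
Definition orient (b : bool) (v : vec) : vec := if b then v else (- v.1, - v.2).
Definition line := (vec * vec)%type.
Definition lpt (L : line) : vec := L.1.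
Definition ldir (L : line) : vec := L.2.
(* parameter t with  lpt Li + t * ldir Li  on Lj *)
Definition cross_param (Li Lj : line) : rat :=
  det (vsub (lpt Lj) (lpt Li)) (ldir Lj) / det (ldir Li) (ldir Lj).

Record picture := Picture {
  pic_lines : seq line;
  pic_label : nat -> nat -> nat;   (* label of crossing of strands i < j *)
  pic_over : nat -> nat -> bool;   (* for i < j : strand i is over strand j *)
  pic_mirror : bool                (* sign convention / mirror image *)
}.

Definition strand (P : picture) (i : nat) : line :=
  nth ((0, 0), (0, 0)) (pic_lines P) i.
Definition crosses (P : picture) (i j : nat) : bool :=
  (i != j) && (det (ldir (strand P i)) (ldir (strand P j)) != 0).
Definition xlabel (P : picture) (i j : nat) : nat := pic_label P (minn i j) (maxn i j).
Definition xover (P : picture) (i j : nat) : bool :=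
  if (i < j)%N then pic_over P i j else ~~ pic_over P j i.
Definition xsign (P : picture) (i j : nat) : bool :=
  let o := if xover P i j then i else j in
  let u := if xover P i j then j else i in
  addb (0 < det (ldir (strand P o)) (ldir (strand P u))) (pic_mirror P).
(* the letters met along strand i, in the order of its orientation *)
Definition fragment (P : picture) (i : nat) : seq letter :=
  [seq (xlabel P i j, xover P i j, xsign P i j) |
     j <- sort (fun j k => cross_param (strand P i) (strand P j)
                           <= cross_param (strand P i) (strand P k))
               [seq j <- iota 0 (size (pic_lines P)) | crosses P i j]].
Definition fragments (P : picture) : seq (seq letter) :=
  [seq fragment P i | i <- iota 0 (size (pic_lines P))].

Definition rotation_step (w w' : seq letter) : Prop :=
  exists u v, w = u ++ v /\ w' = v ++ u.

Definition relabel_step (w w' : seq letter) : Prop :=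
  exists f : nat -> nat, injective f /\ w' = [seq (f l.1.1, l.1.2, l.2) | l <- w].

Definition R1_move (w w' : seq letter) : Prop :=
  exists (c : nat) (o s : bool),
    local_move [:: [:: (c, o, s); (c, ~~ o, s)]] [:: [::]] w w'.

(* strand 0 passes over strand 1 twice; parallel or antiparallel *)
Definition R2_move (w w' : seq letter) : Prop :=
  exists (c d : nat) (s par : bool),
    local_move
      [:: [:: (c, true, s); (d, true, ~~ s)];
          if par then [:: (c, false, s); (d, false, ~~ s)]
                 else [:: (d, false, ~~ s); (c, false, s)]]
      [:: [::]; [::]] w w'.

(* three strands forming a triangle; the third strand is moved across the
   crossing of the other two (h = 1 before, h = -1 after) *)
Definition r3_lines (o0 o1 o2 : bool) (h : rat) : seq line :=
  [:: ((0, 0), orient o0 (1, 0)); ((0, 0), orient o1 (1, 1));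
      ((0, h), orient o2 (1, -1))].
Definition r3_picture (o0 o1 o2 : bool) (ht : nat -> nat) (lb : nat -> nat -> nat)
    (mir : bool) (h : rat) : picture :=
  Picture (r3_lines o0 o1 o2 h) lb (fun i j => (ht j < ht i)%N) mir.
Definition R3_move (w w' : seq letter) : Prop :=
  exists (o0 o1 o2 : bool) (ht : nat -> nat) (lb : nat -> nat -> nat) (mir : bool),
    uniq [:: ht 0%N; ht 1%N; ht 2%N] /\
    local_move (fragments (r3_picture o0 o1 o2 ht lb mir 1))
               (fragments (r3_picture o0 o1 o2 ht lb mir (-1))) w w'.

(* welded move: two adjacent over-passages commute *)
Definition OC_move (w w' : seq letter) : Prop :=
  exists (c d : nat) (s t : bool),
    local_move [:: [:: (c, true, s); (d, true, t)]]
               [:: [:: (d, true, t); (c, true, s)]] w w'.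

(* the "#" : a = strand 0 (y = 1), b = strand 1 (x = 0), c = strand 2 (y = 0),
   d = strand 3 (x = 1); crossings 1 = a/b, 2 = b/c, 3 = c/d, 4 = d/a *)
Definition d_lines (oa ob oc od : bool) : seq line :=
  [:: ((0, 1), orient oa (1, 0)); ((0, 0), orient ob (0, 1));
      ((0, 0), orient oc (1, 0)); ((1, 0), orient od (0, 1))].
Definition diag_flip (diag13 : bool) (i j : nat) : bool :=
  if diag13 then ((i, j) == (0, 1)%N) || ((i, j) == (2, 3)%N)
  else ((i, j) == (1, 2)%N) || ((i, j) == (0, 3)%N).
Definition D_move (w w' : seq letter) : Prop :=
  exists (oa ob oc od : bool) (ov : nat -> nat -> bool) (lb : nat -> nat -> nat)
         (mir diag13 : bool),
    local_move (fragments (Picture (d_lines oa ob oc od) lb ov mir))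
               (fragments (Picture (d_lines oa ob oc od) lb
                                   (fun i j => addb (ov i j) (diag_flip diag13 i j)) mir))
               w w'.

Definition welded_step (w w' : seq letter) : Prop :=
  rotation_step w w' \/ relabel_step w w' \/ R1_move w w' \/ R2_move w w' \/
  R3_move w w' \/ OC_move w w'.

Definition diag_step (w w' : seq letter) : Prop :=
  gauss_ok w /\ gauss_ok w' /\ (welded_step w w' \/ D_move w w').

Definition diag_equivalent : relation (seq letter) :=
  clos_refl_sym_trans (seq letter) diag_step.

From HB Require Import structures.
From mathcomp Require Import all_boot all_order all_algebra.
From mathcomp Require Import zify.
From Stdlib Require Import Relations.

(* Every Gauss word is diagonal-equivalent to the empty word.  The key point is
   that D-moves realise crossing changes: two R2 bigons and an R1 kink placed
   next to a crossing x complete it to a "#" in which x and the kink form a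
   diagonal pair, so a D-move changes both, and the changed kink is still
   removable by R1.  With crossing changes available, every passage met between
   the over- and the under-passage of a crossing c can be made an
   over-passage, which the welded move OC lets the over-passage of c slide
   past; once the two passages of c are adjacent, R1 removes c. *)

Set Implicit Arguments.
Unset Strict Implicit.
Unset Printing Implicit Defensive.

#[local] Arguments rst_sym {A R x y}.
#[local] Arguments rst_trans {A R x y z}.

Ltac perm_solve := apply/permP => ?; rewrite /= ?count_cat /=; lia.

Lemma filter_lab_nil (w : seq letter) c :
  ([seq l <- w | lab l == c] == [::]) = (c \notin map lab w).
Proof. by rewrite -has_pred1 has_map has_filter negbK. Qed.

Lemma gauss_perm w w' : perm_eq w w' -> gauss_ok w -> gauss_ok w'.
Proof.
move=> ww' g c; rewrite -(perm_mem (perm_map lab ww')) => /g [s P].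
by exists s; apply: perm_trans P; rewrite perm_sym perm_filter.
Qed.

Lemma gauss_pair_notin a b w :
  gauss_ok [:: a, b & w] -> lab a = lab b -> lab a \notin map lab w.
Proof.
move=> g ab; have [|s /perm_size] := g (lab a); first by rewrite inE eqxx.
by rewrite /= eqxx -ab eqxx => -[] /size0nil/eqP; rewrite filter_lab_nil.
Qed.

Lemma gauss_pair_tail a b w : gauss_ok [:: a, b & w] -> lab a = lab b -> gauss_ok w.
Proof.
move=> g ab c cw; have [|s] := g c; first by rewrite !inE cw !orbT.
have ca : (lab a == c) = false by apply: contraNF (gauss_pair_notin g ab) => /eqP ->.
by rewrite /= -ab ca; exists s.
Qed.

Lemma gauss_kink c o s w :
  c \notin map lab w -> gauss_ok w -> gauss_ok [:: (c, o, s), (c, ~~ o, s) & w].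
Proof.
move=> cw g d; have [<- _ | cd] := eqVneq c d; last first.
  by rewrite /= !inE [d == c]eq_sym (negbTE cd) /=; apply: g.
exists s; rewrite /= eqxx; move: cw; rewrite -filter_lab_nil => /eqP ->.
by case: o; perm_solve.
Qed.

Lemma gauss_bigon_notin e o s m n :
  gauss_ok ((e, o, s) :: m ++ (e, ~~ o, s) :: n) -> e \notin map lab (m ++ n).
Proof.
move=> g; apply: (@gauss_pair_notin (e, o, s) (e, ~~ o, s)) => //.
by apply: gauss_perm g; perm_solve.
Qed.

Definition flip_at (e : nat) (l : letter) : letter :=
  if lab l == e then (lab l, ~~ l.1.2, ~~ l.2) else l.

Lemma map_flip_at_notin e w : e \notin map lab w -> map (flip_at e) w = w.
Proof.
move=> ew; apply: map_id_in => l lw; rewrite /flip_at.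
by case: eqP => // le; rewrite -le map_f in ew.
Qed.

Lemma gauss_flip_at e w : gauss_ok w -> gauss_ok (map (flip_at e) w).
Proof.
have lab_flip l : lab (flip_at e l) = lab l by rewrite /flip_at; case: ifP.
move=> g d; rewrite -map_comp (eq_map lab_flip) => /g [s P].
rewrite filter_map (eq_filter (a2 := fun l => lab l == d)) => [|l /=]; last by rewrite lab_flip.
have := perm_map (flip_at e) P; rewrite /flip_at /lab /=.
have [-> Q | _ Q] := eqVneq d e; last by exists s.
by exists (~~ s); apply: perm_trans Q _; perm_solve.
Qed.

Lemma gauss_rot_split w e : gauss_ok w -> e \in map lab w ->
  exists k s (m n : seq letter), rot k w = (e, true, s) :: m ++ (e, false, s) :: n.
Proof.
move=> g /g [s P].
have inw o : (e, o, s) \in w.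
  apply: (mem_subseq (filter_subseq (fun l => lab l == e) w)).
  by rewrite (perm_mem P) !inE; case: o; rewrite eqxx ?orbT.
have /rot_index := inw true; move: (index _ w) (drop _ _ ++ _) => k rest rotk.
have inr : (e, false, s) \in rest.
  by have := inw false; rewrite -(mem_rot k) rotk in_cons => /predU1P[[]|].
by move: rotk; case/splitPr: inr => m n rotk; exists k, s, m, n.
Qed.

Lemma diag_equiv_gauss w w' : diag_equivalent w w' -> gauss_ok w <-> gauss_ok w'.
Proof. by elim=> [w1 w2 [g1 [g2 _]] | | | w1 w2 w3 _ IH12 _ IH23]; tauto. Qed.

Lemma diag_chain w1 w2 w3 : gauss_ok w1 -> diag_equivalent w1 w2 ->
  (gauss_ok w2 -> diag_equivalent w2 w3) -> diag_equivalent w1 w3.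
Proof.
move=> g e12 e23; apply: rst_trans (e12) (e23 _).
by apply/(diag_equiv_gauss e12).
Qed.

Lemma diag_equiv_step w w' : gauss_ok w -> gauss_ok w' ->
  welded_step w w' \/ D_move w w' -> diag_equivalent w w'.
Proof. by move=> g g' st; apply: rst_step. Qed.

Lemma diag_rotate u v : gauss_ok (u ++ v) -> diag_equivalent (u ++ v) (v ++ u).
Proof.
move=> g; apply: (diag_equiv_step g); first by apply: gauss_perm g; rewrite perm_catC.
by left; left; exists u, v.
Qed.

Lemma diag_rot k w : gauss_ok w -> diag_equivalent w (rot k w).
Proof. by rewrite -{1 2}(cat_take_drop k w); apply: diag_rotate. Qed.

Lemma diag_R1 c o s w : gauss_ok [:: (c, o, s), (c, ~~ o, s) & w] ->
  diag_equivalent [:: (c, o, s), (c, ~~ o, s) & w] w.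
Proof.
move=> g; apply: diag_equiv_step g (gauss_pair_tail g erefl) _; left; do 2 right; left.
by exists c, o, s; split=> //; exists [:: 0], [:: w]; rewrite /place /= cats0.
Qed.

Lemma diag_R2 c d s u1 u2 : c != d ->
  c \notin map lab (u1 ++ u2) -> d \notin map lab (u1 ++ u2) -> gauss_ok (u1 ++ u2) ->
  diag_equivalent (u1 ++ u2)
    [:: (c, true, s), (d, true, ~~ s) & u1 ++ [:: (d, false, ~~ s), (c, false, s) & u2]].
Proof.
move=> cd cu du g; apply: rst_sym; apply: diag_equiv_step _ (g) _.
  apply: (@gauss_perm [:: (c, true, s), (c, false, s), (d, true, ~~ s), (d, false, ~~ s)
                        & u1 ++ u2]); first by perm_solve.
  by apply: gauss_kink _ (gauss_kink du g); rewrite /= !inE (negbTE cd) (negbTE cu).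
left; do 3 right; left; exists c, d, s, false; split=> //.
by exists [:: 0; 1], [:: u1; u2]; rewrite /place /= ?cats0.
Qed.

Lemma diag_OC c d s t w : gauss_ok [:: (c, true, s), (d, true, t) & w] ->
  diag_equivalent [:: (c, true, s), (d, true, t) & w] [:: (d, true, t), (c, true, s) & w].
Proof.
move=> g; apply: (diag_equiv_step g); first by apply: gauss_perm g; perm_solve.
left; do 5 right; exists c, d, s, t; split=> //.
by exists [:: 0], [:: w]; rewrite /place /= cats0.
Qed.

Ltac fresh_solve fm fn :=
  rewrite /= ?(map_cat, mem_cat, in_cons, in_nil) /lab /=;
  rewrite ?(negbTE (fm _ _)) ?(negbTE (fn _ _)); lia.

(* Crossing x after adding the bigons N, N+1 and N+2, N+3 and the kink N+4:
   x, N+2, N+4, N are the crossings 1, 2, 3, 4 of a "#" (see [D_move]); the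
   blocks are its four strands and the arcs joining them. *)
Definition hash_word (N : nat) (s : bool) (x : nat) (o t : bool) (m n : seq letter) :=
  [:: (N, true, ~~ s); (x, o, t)] ++ m ++ [:: (x, ~~ o, t); (N + 2, false, ~~ s)] ++
  ((N + 3, false, s) :: n ++ [:: (N + 3, true, s)]) ++
  [:: (N + 2, true, ~~ s); (N + 4, o, t)] ++ [:: (N + 4, ~~ o, t); (N, false, ~~ s)] ++
  [:: (N + 1, false, s); (N + 1, true, s)].

Lemma diag_hash N s x o t m n :
  gauss_ok ((x, o, t) :: m ++ (x, ~~ o, t) :: n) ->
  (forall k, N <= k -> k \notin map lab ((x, o, t) :: m ++ (x, ~~ o, t) :: n)) ->
  diag_equivalent ((x, o, t) :: m ++ (x, ~~ o, t) :: n) (hash_word N s x o t m n).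
Proof.
move=> g fresh.
have xN : x < N by rewrite ltnNge; apply: contraL (fresh x) _; rewrite inE eqxx.
have fm k : N <= k -> k \notin map lab m.
  by move/fresh; apply: contra => km; rewrite /= inE map_cat mem_cat km orbT.
have fn k : N <= k -> k \notin map lab n.
  by move/fresh; apply: contra => kn; rewrite /= inE map_cat mem_cat /= inE kn !orbT.
pose PT := (N, true, ~~ s); pose PF := (N, false, ~~ s).
pose QT := (N + 1, true, s); pose QF := (N + 1, false, s).
pose RT := (N + 2, true, ~~ s); pose RF := (N + 2, false, ~~ s).
pose TT := (N + 3, true, s); pose TF := (N + 3, false, s).
pose X1 := (x, o, t); pose X2 := (x, ~~ o, t).
rewrite -[_ :: _ ++ _ :: n]cats0 in g *.
apply: (diag_chain g (diag_R2 s (_ : N + 1 != N) _ _ g));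
  [lia | fresh_solve fm fn | fresh_solve fm fn | move=> g1].
apply: (diag_chain g1 (@diag_rotate [:: QT, PT, X1 & m ++ X2 :: n] [:: PF; QF] g1)) => g2.
have catX2 : m ++ X2 :: n = (m ++ [:: X2]) ++ n by rewrite -catA.
rewrite catX2 in g2 *.
apply: (diag_chain g2 (@diag_R2 (N + 3) (N + 2) s [:: PF, QF, QT, PT, X1 & m ++ [:: X2]] n
                         _ _ _ g2));
  [lia | fresh_solve fm fn | fresh_solve fm fn | move=> g3].
pose u1 := [:: PF, QF, QT, PT, X1 & m ++ [:: X2]].
apply: (diag_chain g3 (@diag_rotate [:: TT; RT] (u1 ++ [:: RF, TF & n]) g3)) => g4.
have f4 : N + 4 \notin map lab ((u1 ++ [:: RF, TF & n]) ++ [:: TT; RT]) by fresh_solve fm fn.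
apply: (diag_chain g4 (rst_sym (diag_R1 (gauss_kink (o := o) (s := t) f4 g4)))) => g5.
pose Y1 := (N + 4, o, t); pose Y2 := (N + 4, ~~ o, t).
apply: (diag_chain g5 (@diag_rotate [:: Y1; Y2; PF; QF; QT] _ g5)) => _.
by rewrite /hash_word /= -?catA; apply: rst_refl.
Qed.

Definition hash_over (i j : nat) : bool :=
  [|| (i, j) == (0, 1), (i, j) == (0, 3) | (i, j) == (2, 3)].

Definition hash_label (x p r y i j : nat) : nat :=
  if (i, j) == (0, 1) then x else if (i, j) == (0, 3) then p
  else if (i, j) == (1, 2) then r else y.

Lemma fragments_hash x p r y mir :
  fragments (Picture (d_lines false false true true) (hash_label x p r y) hash_over mir) =
  [:: [:: (p, true, mir); (x, true, ~~ mir)]; [:: (x, false, ~~ mir); (r, false, mir)];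
      [:: (r, true, mir); (y, true, ~~ mir)]; [:: (y, false, ~~ mir); (p, false, mir)]].
Proof. by case: mir; vm_compute. Qed.

Lemma fragments_hash_flipped x p r y mir :
  fragments (Picture (d_lines false false true true) (hash_label x p r y)
                     (fun i j => hash_over i j (+) diag_flip true i j) mir) =
  [:: [:: (p, true, mir); (x, false, mir)]; [:: (x, true, mir); (r, false, mir)];
      [:: (r, true, mir); (y, false, mir)]; [:: (y, true, mir); (p, false, mir)]].
Proof. by case: mir; vm_compute. Qed.

Lemma diag_hash_D N x s m n :
  gauss_ok (hash_word N s x true s m n) -> gauss_ok (hash_word N s x false (~~ s) m n) ->
  diag_equivalent (hash_word N s x true s m n) (hash_word N s x false (~~ s) m n).
Proof.
move=> g g'; apply: diag_equiv_step g g' _; right.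
exists false, false, true, true, hash_over, (hash_label x N (N + 2) (N + 4)), (~~ s), true.
rewrite fragments_hash fragments_hash_flipped negbK; split=> //.
exists [:: 0; 1; 2; 3], [:: m; (N + 3, false, s) :: n ++ [:: (N + 3, true, s)]; [::];
                         [:: (N + 1, false, s); (N + 1, true, s)]].
by split=> //; rewrite /place /= -?catA.
Qed.

Lemma labels_bounded (w : seq letter) : exists N, forall k, N <= k -> k \notin map lab w.
Proof.
exists (\max_(l <- w) lab l).+1 => k ltk; apply/mapP => -[l lw kl].
by move: ltk; rewrite kl ltnNge leq_bigmax_seq.
Qed.

Lemma diag_crossing_change x s m n :
  gauss_ok ((x, true, s) :: m ++ (x, false, s) :: n) ->
  diag_equivalent ((x, true, s) :: m ++ (x, false, s) :: n)
                  ((x, false, ~~ s) :: m ++ (x, true, ~~ s) :: n).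
Proof.
move=> g; have [N fresh] := labels_bounded ((x, true, s) :: m ++ (x, false, s) :: n).
have /norP[xm xn] : ~~ ((x \in map lab m) || (x \in map lab n)).
  by rewrite -mem_cat -map_cat (gauss_bigon_notin g).
have g' : gauss_ok ((x, false, ~~ s) :: m ++ (x, true, ~~ s) :: n).
  have := gauss_flip_at (e := x) g.
  by rewrite /= map_cat /= !map_flip_at_notin // /flip_at /lab /= eqxx.
have fresh' k : N <= k -> k \notin map lab ((x, false, ~~ s) :: m ++ (x, true, ~~ s) :: n).
  by move/fresh; rewrite /= !map_cat.
have e := diag_hash s g fresh; have e' := diag_hash s g' fresh'.
apply: rst_trans (e) (rst_trans (diag_hash_D _ _) (rst_sym e')).
  exact/(diag_equiv_gauss e).
exact/(diag_equiv_gauss e').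
Qed.

Lemma diag_flip_at e w : gauss_ok w -> diag_equivalent w (map (flip_at e) w).
Proof.
move=> g; have [ew | /map_flip_at_notin -> ] := boolP (e \in map lab w); last exact: rst_refl.
have [k [s [m [n rotw]]]] := gauss_rot_split g ew.
have grot : gauss_ok (rot k w) by apply: gauss_perm g; rewrite perm_sym perm_rot.
have /norP[em en] : ~~ ((e \in map lab m) || (e \in map lab n)).
  by rewrite -mem_cat -map_cat; apply: (@gauss_bigon_notin e true s); rewrite -rotw.
apply: rst_trans (diag_rot k g) _.
apply: rst_trans (rst_sym (diag_rot k (gauss_flip_at (e := e) g))).
rewrite -map_rot rotw /= map_cat /= !map_flip_at_notin // /flip_at /lab /= eqxx.
by apply: diag_crossing_change; rewrite -rotw.
Qed.

Lemma diag_slide_over c s e t v1 v2 :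
  gauss_ok [:: (c, true, s), (e, true, t) & v1 ++ (c, false, s) :: v2] ->
  diag_equivalent [:: (c, true, s), (e, true, t) & v1 ++ (c, false, s) :: v2]
                  ((c, true, s) :: v1 ++ (c, false, s) :: rcons v2 (e, true, t)).
Proof.
move=> g; apply: (diag_chain g (diag_OC g)) => g1.
have := @diag_rotate [:: (e, true, t)] ((c, true, s) :: v1 ++ (c, false, s) :: v2) g1.
by rewrite /= -catA /= cats1.
Qed.

Lemma diag_pass_over c s l v1 v2 :
  gauss_ok [:: (c, true, s), l & v1 ++ (c, false, s) :: v2] ->
  exists v1' v2', [/\ size v1' = size v1, size v2' = (size v2).+1 &
    diag_equivalent [:: (c, true, s), l & v1 ++ (c, false, s) :: v2]
                    ((c, true, s) :: v1' ++ (c, false, s) :: v2')].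
Proof.
case: l => [[e o] t] g.
have /norP[ce _] := gauss_bigon_notin (o := true) (m := (e, o, t) :: v1) g.
case: o g ce => g ce.
  by exists v1, (rcons v2 (e, true, t)); rewrite size_rcons; split=> //; apply: diag_slide_over.
exists (map (flip_at e) v1), (rcons (map (flip_at e) v2) (e, true, ~~ t)).
rewrite size_rcons !size_map; split=> //.
have fc o : flip_at e (c, o, s) = (c, o, s) by rewrite /flip_at /lab /= (negbTE ce).
have fe : flip_at e (e, false, t) = (e, true, ~~ t) by rewrite /flip_at /lab /= eqxx.
have := diag_flip_at e g; rewrite /= map_cat /= !fc fe.
by move=> e1; apply: (diag_chain g e1) => g1; apply: diag_slide_over.
Qed.

Lemma diag_remove_crossing c s v1 v2 :
  gauss_ok ((c, true, s) :: v1 ++ (c, false, s) :: v2) ->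
  exists2 w, size w = size v1 + size v2 &
    diag_equivalent ((c, true, s) :: v1 ++ (c, false, s) :: v2) w.
Proof.
have [k] := ubnP (size v1); elim: k v1 v2 => // k IH [|l v1] v2 szv1 g.
  by exists v2 => //; apply: (diag_R1 (o := true)).
have [v1' [v2' [sz1 sz2 e1]]] := diag_pass_over g.
have [|w szw e2] := IH v1' v2' _ ((diag_equiv_gauss e1).1 g); first by rewrite sz1.
by exists w; [rewrite szw sz1 sz2 addnS | apply: rst_trans e1 e2].
Qed.

Lemma diag_equiv_nil w : gauss_ok w -> diag_equivalent w [::].
Proof.
have [k] := ubnP (size w); elim: k w => // k IH [|l w] szw g; first exact: rst_refl.
have [|i [s [m [n rotw]]]] := gauss_rot_split g (e := lab l); first exact: mem_head.
have grot : gauss_ok (rot i (l :: w)) by apply: gauss_perm g; rewrite perm_sym perm_rot.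
rewrite rotw in grot; have [w' szw' e'] := diag_remove_crossing grot.
apply: (rst_trans (diag_rot i g)); rewrite rotw.
apply: rst_trans e' (IH _ _ ((diag_equiv_gauss e').1 grot)).
have szmn : (size m + size n).+1 = size w.
  by have := size_rot i (l :: w); rewrite rotw /= size_cat /= addnS => -[].
by rewrite szw' -ltnS szmn; apply: ltnW.
Qed.

Theorem mainTheorem5 (K K' : seq letter) :
  gauss_ok K -> gauss_ok K' -> diag_equivalent K K'.
Proof.
move=> gK gK'; exact: rst_trans (diag_equiv_nil gK) (rst_sym (diag_equiv_nil gK')).
Qed.
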